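(* Let $(J,\preccurlyeq)$ be a finite upper semilattice and $F\subseteq K_J$ a subfunctor of the constant functor. Let $A:=\mathrm{supp}(\beta^0F)$ (the set of minimal elements of $\{a\in J\mid F(a)\neq0\}$) and fix a total order $<$ on $A$. Define the global Koszul complex $\mathcal K F$ by \[ (\mathcal K F)_d:=\bigoplus_{S\subseteq A,\ |S|=d+1} K\big(\textstyle\bigvee S,-\big)\qquad (d\geq 0), \] with differential $\partial=\sum_{i=0}^{d+1}(-1)^i\partial_i\colon(\mathcal K F)_{d+1}\to(\mathcal K F)_d$, where $\partial_i$ maps the summand $K(\bigvee S,-)$ indexed by $S=\{s_0<\cdots<s_{d+1}\}$ to the summand $K(\bigvee(S\setminus\{s_i\}),-)$ via the inclusion $K(\bigvee S,-)\subseteq K(\bigvee(S\setminus\{s_i\}),-)$, and with augmentation $\partial\colon(\mathcal K F)_0=\bigoplus_{s\in A}K(s,-)\to F$ given on the summand $K(s,-)$ by the inclusion $K(s,-)\subseteq F$. Then $\cdots\to(\mathcal KF)_1\to(\mathcal KF)_0\to F\to 0$ is a free resolution of $F$ (i.e.\ it is exact, and each $(\mathcal KF)_d$ is a direct sum of functors $K(b,-)$).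
   Context: $K$ is a field and $\mathrm{vect}_K$ the category of finite-dimensional $K$-vector spaces. $K_J\colon J\to\mathrm{vect}_K$ is the constant functor with value $K$ and identity transition maps. For $a\in J$, $K(a,-)\subseteq K_J$ is the subfunctor with $K(a,b)=K$ if $a\preccurlyeq b$ and $0$ otherwise. Subfunctors of $K_J$ correspond to upsets (their supports $\{a\mid F(a)\neq 0\}$), and $\mathrm{supp}(\beta^0F)$, the support of the $0$-th Betti diagram (degrees of generators of a minimal projective cover), equals the set of minimal elements of the support of $F$. An upper semilattice is a poset in which every nonempty subset $S$ has a join $\bigvee S$. *)

From HB Require Import structures.
From mathcomp Require Import all_boot all_order all_algebra.
Set Implicit Arguments. Unset Strict Implicit. Unset Printing Implicit Defensive.
Import Order.TTheory GRing.Theory Num.Theory.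
Local Open Scope ring_scope.

(* A functor J -> vect_K that is a subfunctor of the constant functor K_J is
   given pointwise by subspaces F a of K (viewed as K^o, the regular K-vector
   space), compatible with the identity transition maps. *)
Section Koszul.
Variables (dsp : Order.disp_t) (J : finJoinSemilatticeType dsp) (K : fieldType).
Variable F : J -> {vspace K^o}.

Definition is_subfunctor_const : Prop :=
  forall a b : J, (a <= b)%O -> (F a <= F b)%VS.

Definition minsupp : {set J} :=
  [set a | (F a != 0%VS) && [forall c, (c < a)%O ==> (F c == 0%VS)]].

Definition bigjoin (S : {set J}) : option J :=
  omap (fun x0 => \big[Order.join/x0]_(x in S) x) [pick x in S].

(* K(\/S, b) <> 0, i.e. \/S <= b. *)
Definition join_le (S : {set J}) (b : J) : bool :=
  if bigjoin S is Some j then (j <= b)%O else false.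

(* a total order lt on A; kidx S s = position i of s in S = {s_0 < ... } *)
Variable lt : rel J.
Definition kidx (S : {set J}) (s : J) : nat := #|[set t in S | lt t s]|.

(* (KF)_n evaluated at b = \bigoplus_{S \subseteq A, |S| = n+1} K(\/S, b):
   functions c indexed by subsets S, supported on the S with S \subseteq A,
   |S| = n+1 and \/S <= b (the summands with K(\/S,b) = K). *)
Definition kchain (n : nat) (b : J) (c : {ffun {set J} -> K}) : bool :=
  [forall S, (c S != 0) ==>
     [&& S \subset minsupp, #|S| == n.+1 & join_le S b]].

(* differential sum_i (-1)^i d_i, the d_i being inclusions (identities on
   the nonzero summands): the T-component collects the contributions of all
   S = T u {s}, s = s_i with i = kidx S s. *)
Definition kdiff (c : {ffun {set J} -> K}) : {ffun {set J} -> K} :=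
  [ffun T => \sum_(s in minsupp :\: T) (-1) ^+ kidx (s |: T) s * c (s |: T)].

Definition kaug (c : {ffun {set J} -> K}) : K := \sum_(s in minsupp) c [set s].

End Koszul.

From HB Require Import structures.
From mathcomp Require Import all_boot all_order all_algebra ring.
Import Order.TTheory GRing.Theory Num.Theory.
Set Implicit Arguments. Unset Strict Implicit. Unset Printing Implicit Defensive.
Local Open Scope ring_scope.

(* Since \/S <= b iff every element of S lies below b, the complex evaluated
   at b is the augmented chain complex of the full simplex on the vertex set
   A_b = {a in A | a <= b}, and F b = K exactly when A_b is nonempty (a nonzero
   F b lies above a minimal element of the support).  The boundary squares to
   zero because every codimension-two face is reached along two paths with
   opposite signs, and coning off the lt-least vertex v of A_b,
   c |-> (U |-> c (U :\ v) if v \in U), is a contracting homotopy. *)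

Lemma exists_minimal (T : finType) (R : rel T) (P : pred T) (x0 : T) :
  {in P, forall x, ~~ R x x} ->
  {in P & P & P, forall x y z, R x y -> R y z -> R x z} ->
  P x0 -> exists2 v, P v & {in P, forall u, ~~ R u v}.
Proof.
move=> R_irr R_trans Px0.
have [v Pv v_min] := arg_minnP (fun v => #|[set t | P t && R t v]|) Px0.
exists v => // u Pu; apply/negP => Ruv.
have := v_min u Pu; apply/negP; rewrite -ltnNge; apply: proper_card.
apply/properP; split.
  by apply/subsetP => t; rewrite !inE => /andP[Pt Rtu]; rewrite Pt (R_trans t u v).
by exists u; rewrite !inE ?(Pu : P u) ?Ruv // (negbTE (R_irr u Pu)) andbF.
Qed.

Lemma sum_antisym_offdiag (T : finType) (V : zmodType) (r : rel T) (D : {set T})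
    (g : T -> T -> V) :
  {in D &, forall s t, r s t -> ~~ r t s} ->
  {in D &, forall s t, s != t -> r s t || r t s} ->
  {in D &, forall s t, s != t -> g t s = - g s t} ->
  \sum_(s in D) \sum_(t in D :\ s) g s t = 0.
Proof.
(* The pairs are matched using r rather than by halving the sum, which would
   fail in characteristic 2. *)
move=> r_asym r_total g_anti.
have r_irr s : s \in D -> ~~ r s s.
  by move=> sD; apply/negP => rss; have := r_asym s s sD sD rss; rewrite rss.
have split_offdiag s : s \in D ->
    \sum_(t in D :\ s) g s t = \sum_(t in D | r s t) g s t + \sum_(t in D | r t s) g s t.
  move=> sD; rewrite (bigID (r s)) /=; congr (_ + _); apply: eq_bigl => t;
    rewrite in_setD1; case: (boolP (t \in D)) => tD; rewrite ?andbF //=.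
    by case: (eqVneq t s) => [->|]; rewrite ?(negbTE (r_irr s sD)).
  case: (eqVneq t s) => [->|ts]; first by rewrite (negbTE (r_irr s sD)).
  rewrite eq_sym in ts; have /orP[rst|rts] := r_total s t sD tD ts.
    by rewrite rst (negbTE (r_asym s t sD tD rst)).
  by rewrite rts (r_asym t s tD sD rts).
rewrite (eq_bigr _ split_offdiag) big_split /=.
rewrite [X in _ + X](exchange_big_dep (mem D)) /=; last by move=> ? ? _ /andP[].
rewrite [X in _ + X](eq_bigr (fun s => \sum_(t in D | r s t) g t s)); last first.
  by move=> s sD; apply: eq_bigl => t; rewrite sD.
rewrite -big_split big1 //= => s sD; rewrite -big_split big1 //= => t /andP[tD rst].
have st : s != t by apply: contraTneq rst => <-; exact: r_irr.
by rewrite (g_anti s t) ?addrN.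
Qed.

Lemma vspace_regular_full (K : fieldType) (U : {vspace K^o}) : U != 0%VS -> U = fullv.
Proof. by move=> U0; apply/eqP; rewrite eqEdim subvf dimvf /= lt0n dimv_eq0. Qed.

Lemma bigjoin_le dsp (J : joinSemilatticeType dsp) (b x0 : J) (r : seq J) (P : pred J) :
  ((\big[Order.join/x0]_(x <- r | P x) x) <= b)%O =
  (x0 <= b)%O && all (fun x => P x ==> (x <= b)%O) r.
Proof.
elim: r => [|y r IH]; first by rewrite big_nil andbT.
rewrite big_cons /=; case: (P y) => /=; last by rewrite IH.
by rewrite leUx IH andbCA.
Qed.

Section KoszulComplex.
Variables (dsp : Order.disp_t) (J : finJoinSemilatticeType dsp) (K : fieldType).
Variables (F : J -> {vspace K^o}) (lt : rel J).
Local Notation A := (minsupp F).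
Local Notation kdiff := (kdiff F lt).

Lemma join_leE (S : {set J}) (b : J) :
  join_le S b = (S != set0) && [forall x in S, (x <= b)%O].
Proof.
rewrite /join_le /bigjoin; case: pickP => [x0 Sx0 | S0] /=; last first.
  have -> : S = set0 by apply/setP => x; rewrite inE S0.
  by rewrite eqxx.
rewrite (@bigjoin_le _ J); have -> : S != set0 by apply/set0Pn; exists x0.
apply/andP/forall_inP => [[_ /allP Sb] x Sx | Sb].
  by have /implyP := Sb x (mem_index_enum x); apply.
by split; [exact: Sb | apply/allP => x _; apply/implyP; apply: Sb].
Qed.

Definition minsupp_below (b : J) : {set J} := [set a in A | (a <= b)%O].

Lemma minsupp_below_sub b : minsupp_below b \subset A.
Proof. by apply/subsetP => a; rewrite inE => /andP[]. Qed.

Lemma kchainP n b c :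
  kchain F n b c <-> (forall S, c S != 0 -> S \subset minsupp_below b /\ #|S| = n.+1).
Proof.
split=> [/forallP chain_c S cS | supp_c].
  have /implyP /(_ cS) /and3P[SA /eqP cardS] := chain_c S.
  rewrite join_leE => /andP[_ /forall_inP Sb]; split=> //.
  by apply/subsetP => x Sx; rewrite inE (subsetP SA x Sx) Sb.
apply/forallP => S; apply/implyP => /supp_c[/subsetP Sb cardS].
rewrite cardS eqxx join_leE -card_gt0 cardS /=; apply/andP; split.
  by apply/subsetP => x /Sb; rewrite inE => /andP[].
by apply/forall_inP => x /Sb; rewrite inE => /andP[].
Qed.

Lemma kchain_le n b b' c : (b <= b')%O -> kchain F n b c -> kchain F n b' c.
Proof.
move=> bb' /kchainP chain_c; apply/kchainP => S /chain_c[Sb cardS]; split=> //.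
apply: subset_trans Sb _; apply/subsetP => x; rewrite !inE => /andP[-> xb].
exact: le_trans xb bb'.
Qed.

Lemma kchain_kdiff n b c : kchain F n.+1 b c -> kchain F n b (kdiff c).
Proof.
move/kchainP => chain_c; apply/kchainP => T; rewrite ffunE => dcT.
have [s sT csT] : exists2 s, s \in A :\: T & c (s |: T) != 0.
  apply/exists_inP; apply: contraNT dcT => /exists_inPn c0.
  by apply/eqP/big1 => s /c0 /negPn /eqP ->; rewrite mulr0.
have [sTb] := chain_c _ csT; move: sT; rewrite inE => /andP[sT _].
rewrite cardsU1 sT add1n => -[cardT]; split=> //.
exact: subset_trans (subsetUr _ _) sTb.
Qed.

Lemma minsupp_below_neq0 b : F b != 0%VS -> minsupp_below b != set0.
Proof.
move=> Fb; have [a /andP[Fa ab] a_min] := @exists_minimal _ <%O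
  [pred a | (F a != 0%VS) && (a <= b)%O] b (fun a _ => negbT (ltxx a))
  (fun x y z _ _ _ => @lt_trans _ _ y x z) (introT andP (conj Fb (lexx b))).
apply/set0Pn; exists a; rewrite !inE Fa ab andbT /=.
apply/forall_inP => x xa; apply/negPn/negP => Fx.
by have := a_min x; rewrite inE /= Fx (le_trans (ltW xa) ab) xa => /(_ isT).
Qed.

Lemma kaug_surj b (x : K^o) : x \in F b -> exists c, kchain F 0 b c /\ kaug F c = x.
Proof.
have [-> _|x_neq0 xFb] := eqVneq x 0.
  exists 0; split; first by apply/kchainP => S; rewrite ffunE eqxx.
  by apply: big1 => s _; rewrite ffunE.
have /set0Pn[a ab] : minsupp_below b != set0.
  by apply: minsupp_below_neq0; apply: contra_neq x_neq0 => Fb0; apply/eqP; rewrite -memv0 -Fb0.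
have aA : a \in A by move: ab; rewrite inE => /andP[].
exists [ffun S => if S == [set a] then x else 0]; split.
  apply/kchainP => S; rewrite ffunE; case: (eqVneq S [set a]) => [-> _|_]; last by rewrite eqxx.
  by rewrite sub1set ab cards1.
rewrite /kaug (bigD1 a) //= ffunE eqxx big1 ?addr0 // => s /andP[_ sa].
by rewrite ffunE (inj_eq set1_inj) (negbTE sa).
Qed.

Hypothesis F_sub : is_subfunctor_const F.

Lemma kaug_mem b c : kchain F 0 b c -> (kaug F c : K^o) \in F b.
Proof.
move/kchainP => chain_c; apply: rpred_sum => s _.
have [-> | /chain_c[]] := eqVneq (c [set s]) 0; first exact: rpred0.
rewrite sub1set inE => /andP[sA sb] _.
have Fs : F s != 0%VS by move: sA; rewrite inE => /andP[].
have Fb : F b != 0%VS by apply: contra_neq Fs => Fb0; apply/eqP; rewrite -subv0 -Fb0 F_sub.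
by rewrite (vspace_regular_full Fb) memvf.
Qed.

Lemma kidxU1 (x : J) (X : {set J}) (y : J) :
  x \notin X -> kidx lt (x |: X) y = (lt x y + kidx lt X y)%N.
Proof.
move=> xX; rewrite /kidx; case: (boolP (lt x y)) => [xy | /negbTE xy].
  have -> : [set t in x |: X | lt t y] = x |: [set t in X | lt t y].
    by apply/setP=> t; rewrite !inE; case: (eqVneq t x) => [->|].
  by rewrite cardsU1 inE (negbTE xX).
apply: eq_card => t; rewrite !inE.
by case: (eqVneq t x) => [->|]; rewrite ?xy ?andbF.
Qed.

Lemma kidx_eq0 (X : {set J}) (y : J) : {in X, forall u, ~~ lt u y} -> kidx lt X y = 0%N.
Proof.
move=> Xy; apply/eqP; rewrite cards_eq0; apply/eqP/setP => t; rewrite !inE.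
by apply/negP => /andP[/Xy /negP].
Qed.

Hypothesis lt_irr : {in A, forall x, ~~ lt x x}.
Hypothesis lt_trans : {in A & A & A, forall x y z, lt x y -> lt y z -> lt x z}.
Hypothesis lt_total : {in A &, forall x y, x != y -> lt x y || lt y x}.

Lemma lt_asym : {in A &, forall x y, lt x y -> ~~ lt y x}.
Proof.
move=> x y xA yA xy; apply/negP => yx.
by have := lt_irr xA; rewrite (lt_trans xA yA xA xy yx).
Qed.

Lemma kdiffK c : kdiff (kdiff c) = 0.
Proof.
apply/ffunP => T; rewrite !ffunE.
pose g s t := (-1) ^+ kidx lt (s |: T) s *
  ((-1) ^+ kidx lt (t |: (s |: T)) t * c (t |: (s |: T))).
transitivity (\sum_(s in A :\: T) \sum_(t in (A :\: T) :\ s) g s t).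
  apply: eq_bigr => s _; rewrite ffunE mulr_sumr; apply: eq_bigl => t.
  by rewrite setDDl setUC.
apply: (@sum_antisym_offdiag _ _ lt) => [s t | s t | s t];
  rewrite !in_setD => /andP[sT sA] /andP[tT tA].
- exact: lt_asym.
- exact: lt_total.
move=> st; have sTt : s \notin t |: T by rewrite in_setU1 negb_or st.
have tTs : t \notin s |: T by rewrite in_setU1 negb_or eq_sym st.
rewrite /g (kidxU1 _ sTt) (kidxU1 _ tTs) !(kidxU1 _ sT) !(kidxU1 _ tT).
rewrite (negbTE (lt_irr sA)) (negbTE (lt_irr tA)) !add0n setUCA.
have /orP[lst|lst] := lt_total sA tA st.
  by rewrite lst (negbTE (lt_asym sA tA lst)) /= !exprD expr1 expr0; ring.
by rewrite lst (negbTE (lt_asym tA sA lst)) /= !exprD expr1 expr0; ring.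
Qed.

Lemma kaugE c : kaug F c = kdiff c set0.
Proof.
rewrite ffunE setD0; apply: eq_bigr => s sA.
by rewrite setU0 kidx_eq0 ?mul1r // => u /set1P ->; exact: lt_irr.
Qed.

Lemma kaug_kdiff c : kaug F (kdiff c) = 0.
Proof. by rewrite kaugE kdiffK ffunE. Qed.

Definition kcone (v : J) (c : {ffun {set J} -> K}) : {ffun {set J} -> K} :=
  [ffun U : {set J} => if v \in U then c (U :\ v) else 0].

Lemma kcone_homotopy (X : {set J}) (v : J) (c : {ffun {set J} -> K}) :
  X \subset A -> v \in X -> {in X, forall s, s != v -> lt v s} ->
  (forall S, c S != 0 -> S \subset X) ->
  kdiff (kcone v c) + kcone v (kdiff c) = c.
Proof.
move=> /subsetP XA vX v_least supp_c; have vA := XA v vX.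
have sign_v S : (-1) ^+ kidx lt S v * c S = c S.
  have [-> | /supp_c /subsetP SX] := eqVneq (c S) 0; first by rewrite mulr0.
  rewrite kidx_eq0 ?mul1r // => u /SX uX.
  have [-> | uv] := eqVneq u v; first exact: lt_irr.
  exact: lt_asym vA (XA u uX) (v_least u uX uv).
apply/ffunP => T; rewrite !ffunE.
have [vT | vT] := boolP (v \in T); last first.
  rewrite addr0 (bigD1 v) /=; last by rewrite in_setD vT vA.
  rewrite big1 ?addr0 => [|s /andP[_ sv]]; last first.
    by rewrite ffunE in_setU1 (negbTE vT) orbF eq_sym (negbTE sv) mulr0.
  by rewrite ffunE setU11 setU1K // (kidxU1 _ vT) (negbTE (lt_irr vA)) sign_v.
have vTv : v \notin T :\ v by rewrite setD11.
rewrite [X in _ + X](bigD1 v) /=; last by rewrite in_setD vTv vA.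
rewrite setD1K // sign_v addrCA.
rewrite [X in _ + (_ + X)](eq_bigl (fun s => s \in A :\: T)); last first.
  by move=> s; rewrite !in_setD !inE; case: eqVneq => [->|]; rewrite ?vT ?andbF ?andbT.
rewrite -big_split big1 ?addr0 //= => s; rewrite in_setD => /andP[sT sA].
have sv : s != v by apply: contraNneq sT => ->.
rewrite ffunE in_setU1 vT orbT.
have -> : (s |: T) :\ v = s |: (T :\ v).
  apply/setP => u; rewrite !inE; case: (eqVneq u v) => [->|] /=; last by [].
  by rewrite eq_sym (negbTE sv).
have [-> | /supp_c /subsetP sTX] := eqVneq (c (s |: (T :\ v))) 0; first by rewrite !mulr0 addr0.
have vsT : v \notin s |: (T :\ v) by rewrite in_setU1 negb_or eq_sym sv.
(* Adding the least vertex v in front of s shifts the position of s by one. *)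
rewrite -{1}(setD1K vT) setUCA (kidxU1 _ vsT) (v_least s) ?sTX ?setU11 //.
by rewrite exprS mulN1r mulNr addNr.
Qed.

Lemma kchain_kcone n b v c :
  v \in minsupp_below b -> kchain F n b c -> kchain F n.+1 b (kcone v c).
Proof.
move=> vb /kchainP chain_c; apply/kchainP => U; rewrite ffunE.
case: ifP => [vU /chain_c[Ub cardU] | _]; last by rewrite eqxx.
rewrite -(setD1K vU) subUset sub1set vb Ub cardsU1 setD11 cardU.
by split.
Qed.

Lemma minsupp_below_least b :
  minsupp_below b != set0 ->
  exists2 v, v \in minsupp_below b & {in minsupp_below b, forall s, s != v -> lt v s}.
Proof.
have belowA := subsetP (minsupp_below_sub b).
case/set0Pn => x0 x0b.
have [v vb v_min] := @exists_minimal _ lt (mem (minsupp_below b)) x0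
  (fun x xb => lt_irr (belowA x xb))
  (fun x y z xb yb zb => lt_trans (belowA x xb) (belowA y yb) (belowA z zb)) x0b.
exists v => // s sb sv.
by have /orP[svl|//] := lt_total (belowA s sb) (belowA v vb) sv; have := v_min s sb; rewrite svl.
Qed.

Lemma kchain_exact n b z : kchain F n b z -> kdiff z = 0 ->
  exists c, kchain F n.+1 b c /\ kdiff c = z.
Proof.
move=> chain_z dz0; have /kchainP supp_z := chain_z.
have [b0 | /minsupp_below_least[v vb v_least]] := eqVneq (minsupp_below b) set0.
  have z0 : z = 0.
    apply/ffunP => S; rewrite ffunE; apply/eqP/contraT => /supp_z[].
    by rewrite b0 subset0 => /eqP ->; rewrite cards0.
  exists z; split; last by rewrite dz0 z0.
  by apply/kchainP => S; rewrite z0 ffunE eqxx.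
exists (kcone v z); split; first exact: kchain_kcone.
have kcone0 : kcone v 0 = 0 by apply/ffunP => U; rewrite !ffunE; case: ifP.
rewrite -[RHS](kcone_homotopy (minsupp_below_sub b) vb v_least) ?dz0 ?kcone0 ?addr0 //.
by move=> S /supp_z[].
Qed.

Lemma kdiff_kaug0 b z : kchain F 0 b z -> kaug F z = 0 -> kdiff z = 0.
Proof.
move=> /kchainP supp_z aug0; apply/ffunP => T; rewrite [RHS]ffunE.
have [-> | T0] := eqVneq T set0; first by rewrite -kaugE.
rewrite ffunE big1 // => s; rewrite in_setD => /andP[sT _].
have [-> | /supp_z[_]] := eqVneq (z (s |: T)) 0; first by rewrite mulr0.
by rewrite cardsU1 sT add1n => -[/eqP]; rewrite cards_eq0 (negbTE T0).
Qed.

End KoszulComplex.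

Theorem proposition4p8 (dsp : Order.disp_t) (J : finJoinSemilatticeType dsp)
    (K : fieldType) (F : J -> {vspace K^o}) (lt : rel J) :
  is_subfunctor_const F ->
  {in minsupp F, forall x, ~~ lt x x} ->
  {in minsupp F & minsupp F & minsupp F,
     forall x y z, lt x y -> lt y z -> lt x z} ->
  {in minsupp F &, forall x y, x != y -> lt x y || lt y x} ->
  (* the terms are functors: (KF)_n(b) \subseteq (KF)_n(b') for b <= b',
     all maps being given by the same (pointwise-defined) formulas *)
  (forall (n : nat) (b b' : J) c, (b <= b')%O -> kchain F n b c -> kchain F n b' c) /\
  (* the differential and augmentation are well-defined maps *)
  (forall (n : nat) (b : J) c, kchain F n.+1 b c -> kchain F n b (kdiff F lt c)) /\
  (forall (b : J) c, kchain F 0 b c -> (kaug F c : K^o) \in F b) /\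
  (* it is a complex *)
  (forall (b : J) c, kchain F 1 b c -> kaug F (kdiff F lt c) = 0) /\
  (forall (n : nat) (b : J) c, kchain F n.+2 b c -> kdiff F lt (kdiff F lt c) = 0) /\
  (* exactness at F (augmentation surjective) *)
  (forall (b : J) (x : K^o), x \in F b ->
     exists c, kchain F 0 b c /\ kaug F c = x) /\
  (* exactness at (KF)_0 *)
  (forall (b : J) c, kchain F 0 b c -> kaug F c = 0 ->
     exists c', kchain F 1 b c' /\ kdiff F lt c' = c) /\
  (* exactness at (KF)_(n+1) *)
  (forall (n : nat) (b : J) c, kchain F n.+1 b c -> kdiff F lt c = 0 ->
     exists c', kchain F n.+2 b c' /\ kdiff F lt c' = c).
Proof.
move=> F_sub lt_irr lt_trans lt_total.
split; first exact: kchain_le.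
split; first exact: kchain_kdiff.
split; first exact: kaug_mem.
split; first by move=> b c _; exact: kaug_kdiff.
split; first by move=> n b c _; exact: kdiffK.
split; first exact: kaug_surj.
split; last by move=> n b c; exact: kchain_exact.
move=> b c chain_c aug0.
by move: (kdiff_kaug0 lt_irr chain_c aug0); apply: kchain_exact.
Qed.
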